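(* Let $k$ be an odd positive integer. Then $$\sum_{n=1}^{k}\frac{1}{\cos^4(2\pi n/k)}=\sum_{n=1}^{k}\frac{1}{\cos^4(\pi n/k)}=\frac{k^2(k^2+2)}{3}.$$ *)

From Stdlib Require Export Reals.
Open Scope R_scope.

(* sum_{n=1}^{k} f n, for k >= 1 *)
Definition sum1 (f : nat -> R) (k : nat) : R :=
  sum_f_R0 (fun i => f (S i)) (Nat.pred k).

From Stdlib Require Import Reals ZArith Lia Lra.
Open Scope R_scope.

(* Put a_n = pi n / k and E_m(j) = sum_{n=1}^k cos((2j - m) a_n) / cos^m a_n, so that
   the sum of 1/cos^4 a_n is E_4(2).  From cos(y - a) + cos(y + a) = 2 cos y cos a,
     E_{m+1}(j) + E_{m+1}(j+1) = 2 E_m(j),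
   and E_m(j) is k-periodic in j.  Since k is odd, a function on Z/k is determined by
   its sums over consecutive pairs, so starting from E_0(j) = k [k | j] the values
   E_m(j), 1 <= j <= k, are obtained by guessing (-1)^j P_m(k, j) for explicit
   polynomials P_m and checking the recurrence.  For the sum over 2 pi n / k, note that
   n |-> 2n permutes the residues mod k and that 1/cos^4(pi n / k) is k-periodic. *)

Fixpoint rsum (f : nat -> R) (n : nat) : R :=
  match n with O => 0 | S n => rsum f n + f n end.

Lemma rsum_ext f g n : (forall i, (i < n)%nat -> f i = g i) -> rsum f n = rsum g n.
Proof.
  induction n as [|n IH]; intros Hfg; simpl; [reflexivity|].
  rewrite IH by (intros; apply Hfg; lia). rewrite Hfg by lia. reflexivity.
Qed.

Lemma rsum_add f g n : rsum (fun i => f i + g i) n = rsum f n + rsum g n.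
Proof. induction n as [|n IH]; simpl; [ring|]. rewrite IH. ring. Qed.

Lemma rsum_scal c f n : rsum (fun i => c * f i) n = c * rsum f n.
Proof. induction n as [|n IH]; simpl; [ring|]. rewrite IH. ring. Qed.

Lemma rsum_const c n : rsum (fun _ => c) n = INR n * c.
Proof. induction n as [|n IH]; simpl rsum; [simpl; ring|]. rewrite IH, S_INR. ring. Qed.

Lemma rsum_split f m n : rsum f (m + n) = rsum f m + rsum (fun i => f (m + i)%nat) n.
Proof.
  induction n as [|n IH]; simpl; [rewrite Nat.add_0_r; ring|].
  rewrite Nat.add_succ_r. simpl. rewrite IH. ring.
Qed.

Lemma rsum_telescope g n : rsum (fun i => g (S i) - g i) n = g n - g O.
Proof. induction n as [|n IH]; simpl; [ring|]. rewrite IH. ring. Qed.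

Lemma sum1_rsum f k : (1 <= k)%nat -> sum1 f k = rsum (fun i => f (S i)) k.
Proof.
  intros Hk. unfold sum1. replace k with (S (Nat.pred k)) at 2 by lia.
  induction (Nat.pred k) as [|n IH]; simpl; [ring|]. rewrite IH. reflexivity.
Qed.

Lemma rsum_even_odd f q :
  rsum (fun i => f (S i)) (2 * q + 1)
  = rsum (fun i => f (2 * S i)%nat) q + rsum (fun i => f (2 * i + 1)%nat) (S q).
Proof.
  induction q as [|q IH]; [simpl; ring|].
  replace (2 * S q + 1)%nat with (S (S (2 * q + 1))) by lia. cbn [rsum].
  rewrite IH. cbn [rsum].
  replace (S (2 * q + 1)) with (2 * S q)%nat by lia.
  replace (S (2 * S q)) with (2 * S q + 1)%nat by lia. ring.
Qed.

(* For odd k = 2q + 1, n |-> 2n maps 1..q onto the even and q+1..k onto the odd residues. *)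
Lemma rsum_double_periodic f k : Nat.Odd k -> (forall m, f (m + k)%nat = f m) ->
  rsum (fun i => f (2 * S i)%nat) k = rsum (fun i => f (S i)) k.
Proof.
  intros [q ->] Hper. rewrite rsum_even_odd.
  replace (2 * q + 1)%nat with (q + S q)%nat at 1 by lia. rewrite rsum_split. f_equal.
  apply rsum_ext. intros i _. rewrite <- (Hper (2 * i + 1)%nat). f_equal. lia.
Qed.

Lemma rsum_cos_telescope x n :
  2 * sin (x / 2) * rsum (fun i => cos (INR (S i) * x)) n
  = sin ((INR n + / 2) * x) - sin (x / 2).
Proof.
  rewrite <- rsum_scal.
  transitivity (rsum (fun i => sin ((INR (S i) + / 2) * x) - sin ((INR i + / 2) * x)) n).
  - apply rsum_ext. intros i _. rewrite form4, S_INR.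
    replace (((INR i + 1 + / 2) * x + (INR i + / 2) * x) / 2) with ((INR i + 1) * x) by field.
    replace (((INR i + 1 + / 2) * x - (INR i + / 2) * x) / 2) with (x / 2) by field.
    ring.
  - rewrite (rsum_telescope (fun i => sin ((INR i + / 2) * x))).
    simpl INR. do 2 f_equal. field.
Qed.

Lemma odd_cycle_alternating k (D : nat -> R) : Nat.Odd k ->
  (forall s, (1 <= s < k)%nat -> D s + D (S s) = 0) -> D k + D 1%nat = 0 ->
  forall s, (1 <= s <= k)%nat -> D s = 0.
Proof.
  intros [q Hq] Hpair Hwrap.
  assert (Halt : forall i, (i < k)%nat -> D (S i) = (-1) ^ i * D 1%nat).
  { induction i as [|i IH]; intros Hi; [simpl; ring|].
    specialize (Hpair (S i) ltac:(lia)). rewrite IH in Hpair by lia. simpl. lra. }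
  assert (Hk : D k = D 1%nat).
  { replace k with (S (2 * q)) at 1 by lia. rewrite Halt, pow_1_even by lia. ring. }
  intros [|s] Hs; [lia|]. rewrite Halt by lia. replace (D 1%nat) with 0 by lra. ring.
Qed.

Section OddModulus.

Variable k : nat.
Hypothesis k_odd : Nat.Odd k.

Lemma k_ge1 : (1 <= k)%nat.
Proof. destruct k_odd. lia. Qed.

Lemma INR_k_pos : 0 < INR k.
Proof. apply lt_0_INR, k_ge1. Qed.

Lemma pow_m1_k : (-1) ^ k = -1.
Proof. destruct k_odd as [q ->]. rewrite Nat.add_1_r. apply pow_1_odd. Qed.

Definition angle (n : nat) : R := PI * INR n / INR k.

(* cos (pi n / k) = 0 would force 2n = (2z + 1) k, an odd number. *)
Lemma cos_angle_neq0 n : cos (angle n) <> 0.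
Proof.
  intros Hcos. apply cos_eq_0_0 in Hcos as [z Hz]. unfold angle in Hz.
  destruct k_odd as [q Hq]. pose proof INR_k_pos as Hk. pose proof PI_RGT_0.
  assert (Hint : 2 * INR n = (2 * IZR z + 1) * INR k).
  { apply Rmult_eq_reg_l with (PI / INR k).
    - replace (PI / INR k * (2 * INR n)) with (2 * (PI * INR n / INR k)) by (field; lra).
      rewrite Hz. field. lra.
    - apply Rgt_not_eq, Rdiv_lt_0_compat; assumption. }
  rewrite !INR_IZR_INZ in Hint.
  change 2 with (IZR 2) in Hint. change 1 with (IZR 1) in Hint.
  rewrite <- !mult_IZR, <- plus_IZR, <- mult_IZR in Hint.
  apply eq_IZR in Hint. rewrite Hq, Nat2Z.inj_add, Nat2Z.inj_mul in Hint. lia.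
Qed.

Definition E (m j : nat) : R :=
  rsum (fun i => cos ((2 * INR j - INR m) * angle (S i)) / cos (angle (S i)) ^ m) k.

Lemma E_succ m j : E (S m) j + E (S m) (S j) = 2 * E m j.
Proof.
  unfold E. rewrite <- rsum_add, <- rsum_scal. apply rsum_ext. intros i _.
  set (a := angle (S i)). pose proof (cos_angle_neq0 (S i)) as Ha. fold a in Ha.
  set (y := (2 * INR j - INR m) * a).
  rewrite !S_INR.
  replace ((2 * INR j - (INR m + 1)) * a) with (y - a) by (unfold y; ring).
  replace ((2 * (INR j + 1) - (INR m + 1)) * a) with (y + a) by (unfold y; ring).
  rewrite cos_minus, cos_plus. simpl pow.
  assert (cos a ^ m <> 0) by (apply pow_nonzero; assumption).
  field. auto.
Qed.

Lemma E_periodic m : E m (S k) = E m 1.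
Proof.
  unfold E. apply rsum_ext. intros i _. f_equal. pose proof INR_k_pos.
  symmetry. rewrite <- (cos_period _ (S i)). f_equal.
  unfold angle. rewrite !S_INR. simpl INR. field. lra.
Qed.

Lemma E0_k : E 0 k = INR k.
Proof.
  unfold E. transitivity (rsum (fun _ => 1) k); [|rewrite rsum_const; ring].
  apply rsum_ext. intros i _. pose proof INR_k_pos. unfold angle.
  replace ((2 * INR k - INR 0) * (PI * INR (S i) / INR k)) with (0 + 2 * INR (S i) * PI)
    by (simpl INR; field; lra).
  rewrite cos_period, cos_0. simpl. field.
Qed.

Lemma E0_lt s : (1 <= s < k)%nat -> E 0 s = 0.
Proof.
  intros Hs. pose proof INR_k_pos. pose proof PI_RGT_0.
  set (x := 2 * PI * INR s / INR k).
  assert (Hsin : 0 < sin (x / 2)).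
  { assert (0 < INR s / INR k < 1).
    { split; [apply Rdiv_lt_0_compat; [apply lt_0_INR; lia|lra]|].
      apply Rmult_lt_reg_r with (INR k); [lra|].
      field_simplify; [apply lt_INR; lia|lra]. }
    replace (x / 2) with (PI * (INR s / INR k)) by (unfold x; field; lra).
    apply sin_gt_0; nra. }
  assert (Hsum : E 0 s = rsum (fun i => cos (INR (S i) * x)) k).
  { apply rsum_ext. intros i _. unfold angle, x. simpl pow. rewrite Rdiv_1_r. f_equal.
    simpl INR. field. lra. }
  apply Rmult_eq_reg_l with (2 * sin (x / 2)); [|lra].
  rewrite Hsum, rsum_cos_telescope, Rmult_0_r.
  replace ((INR k + / 2) * x) with (x / 2 + 2 * INR s * PI) by (unfold x; field; lra).
  rewrite sin_period. ring.
Qed.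

Lemma E_succ_unique m (F : nat -> R) :
  (forall s, (1 <= s < k)%nat -> F s + F (S s) = 2 * E m s) ->
  F k + F 1%nat = 2 * E m k ->
  forall s, (1 <= s <= k)%nat -> E (S m) s = F s.
Proof.
  intros Hpair Hwrap s Hs.
  enough (E (S m) s - F s = 0) by lra. revert s Hs.
  apply (odd_cycle_alternating k (fun s => E (S m) s - F s) k_odd).
  - intros s Hs. specialize (Hpair s Hs). rewrite <- E_succ in Hpair. lra.
  - rewrite <- E_periodic. pose proof (E_succ m k). lra.
Qed.

Definition signed (P : R -> R -> R) (s : nat) : R := (-1) ^ s * P (INR k) (INR s).

Lemma E_succ_signed m (P Q : R -> R -> R) :
  (forall s, (1 <= s <= k)%nat -> E m s = signed Q s) ->
  (forall x, P (INR k) x - P (INR k) (x + 1) = 2 * Q (INR k) x) ->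
  P (INR k) (INR k) + P (INR k) 1 = 2 * Q (INR k) (INR k) ->
  forall s, (1 <= s <= k)%nat -> E (S m) s = signed P s.
Proof.
  intros HQ Hdiff Hwrap. apply E_succ_unique.
  - intros s Hs. rewrite HQ by lia. unfold signed.
    rewrite S_INR.
    replace (2 * ((-1) ^ s * Q (INR k) (INR s))) with ((-1) ^ s * (2 * Q (INR k) (INR s)))
      by ring.
    rewrite <- Hdiff. simpl pow. ring.
  - rewrite HQ by (pose proof k_ge1; lia). unfold signed. rewrite pow_m1_k.
    replace (2 * (-1 * Q (INR k) (INR k))) with (- (2 * Q (INR k) (INR k))) by ring.
    rewrite <- Hwrap. simpl. ring.
Qed.

Definition P1 (K x : R) := - K.
Definition P2 (K x : R) := 2 * K * x - K * (K + 2).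
Definition P3 (K x : R) := - 2 * K * x ^ 2 + 2 * K * (K + 3) * x - (3 * K ^ 2 + 4 * K).
Definition P4 (K x : R) :=
  2 * K / 3 * (x - 1) * x * (2 * x - 1) - 2 * K * (K + 3) * x * (x - 1)
  + 2 * (3 * K ^ 2 + 4 * K) * (x - 1) + (K ^ 4 - 4 * K ^ 2) / 3.

Lemma E1_closed_form s : (1 <= s <= k)%nat -> E 1 s = signed P1 s.
Proof.
  apply E_succ_unique.
  - intros s' Hs'. rewrite E0_lt by lia. unfold signed, P1. simpl. ring.
  - rewrite E0_k. unfold signed, P1. rewrite pow_m1_k. simpl. ring.
Qed.

Lemma E4_closed_form s : (1 <= s <= k)%nat -> E 4 s = signed P4 s.
Proof.
  assert (E2 := E_succ_signed 1 P2 P1 E1_closed_form ltac:(intros; unfold P1, P2; ring)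
                  ltac:(unfold P1, P2; ring)).
  assert (E3 := E_succ_signed 2 P3 P2 E2 ltac:(intros; unfold P2, P3; ring)
                  ltac:(unfold P2, P3; ring)).
  exact (E_succ_signed 3 P4 P3 E3 ltac:(intros; unfold P3, P4; field)
           ltac:(unfold P3, P4; field) s).
Qed.

Lemma sum_inv_cos4 :
  rsum (fun i => 1 / cos (angle (S i)) ^ 4) k = INR k ^ 2 * (INR k ^ 2 + 2) / 3.
Proof.
  destruct (Nat.eq_dec k 1) as [Hk1|Hk1].
  - unfold angle. rewrite Hk1. simpl. replace (PI * 1 / 1) with (0 + PI) by field.
    rewrite neg_cos, cos_0. field.
  - transitivity (E 4 2).
    + apply rsum_ext. intros i _. unfold E.
      replace (2 * INR 2 - INR 4) with 0 by (simpl; ring). rewrite Rmult_0_l, cos_0. reflexivity.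
    + destruct k_odd. rewrite E4_closed_form by lia. unfold signed, P4. simpl. field.
Qed.

End OddModulus.

Theorem mainTheorem2 (k : nat) (Hk : Nat.Odd k) :
  sum1 (fun n => 1 / (cos (2 * PI * INR n / INR k)) ^ 4) k
    = sum1 (fun n => 1 / (cos (PI * INR n / INR k)) ^ 4) k
  /\ sum1 (fun n => 1 / (cos (PI * INR n / INR k)) ^ 4) k
    = (INR k) ^ 2 * ((INR k) ^ 2 + 2) / 3.
Proof.
  pose proof (INR_k_pos k Hk) as Hkpos.
  pose proof (k_ge1 k Hk) as Hk1.
  set (f := fun n => 1 / cos (angle k n) ^ 4).
  assert (Hdouble : forall n, 1 / cos (2 * PI * INR n / INR k) ^ 4 = f (2 * n)%nat).
  { intros n. unfold f, angle. rewrite mult_INR. do 3 f_equal. simpl. field. lra. }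
  assert (Hper : forall m, f (m + k)%nat = f m).
  { intros m. unfold f, angle. rewrite plus_INR.
    replace (PI * (INR m + INR k) / INR k) with (PI * INR m / INR k + PI) by (field; lra).
    rewrite neg_cos. f_equal. ring. }
  rewrite !sum1_rsum by assumption. split.
  - rewrite (rsum_ext _ (fun i => f (2 * S i)%nat)) by (intros; apply Hdouble).
    apply (rsum_double_periodic f k Hk Hper).
  - exact (sum_inv_cos4 k Hk).
Qed.
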